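(* Let $\mathfrak g$ be a finite-dimensional complex simple Lie algebra, $\lambda\in P^+$, $i\in I$ and $w\in W$ such that $\lambda-w^{-1}\omega_i\in P^+$. Then $(\lambda,\lambda)$ is maximal in $P^+(2\lambda,2)/\!\sim$ and $(\lambda,\lambda-w^{-1}\omega_i)$ is maximal in $P^+(2\lambda-w^{-1}\omega_i,2)/\!\sim$; that is, if $\boldsymbol\mu\in P^+(2\lambda,2)$ with $(\lambda,\lambda)\preceq\boldsymbol\mu$ then $\boldsymbol\mu\sim(\lambda,\lambda)$, and if $\boldsymbol\mu\in P^+(2\lambda-w^{-1}\omega_i,2)$ with $(\lambda,\lambda-w^{-1}\omega_i)\preceq\boldsymbol\mu$ then $\boldsymbol\mu\sim(\lambda,\lambda-w^{-1}\omega_i)$.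
   Context: $\mathfrak g$ has simple roots indexed by $I$, fundamental weights $\omega_i$, positive roots $R^+$, coroots $h_\alpha$, Weyl group $W$, dominant integral weights $P^+$. For $\lambda\in P^+$, $P^+(\lambda,2)=\{(\lambda_1,\lambda_2)\in(P^+)^2:\lambda_1+\lambda_2=\lambda\}$; $(\lambda_1,\lambda_2)\preceq(\mu_1,\mu_2)$ means $\min\{\lambda_1(h_\alpha),\lambda_2(h_\alpha)\}\le\min\{\mu_1(h_\alpha),\mu_2(h_\alpha)\}$ for all $\alpha\in R^+$, and $\sim$ means equality of these minima for all $\alpha\in R^+$. *)

(* A finite-dimensional complex simple Lie algebra is encoded
   by its Cartan matrix: an indecomposable Cartan matrix of finite type
   (Kac's convention a_ij = alpha_j(h_i)), indexed by I = 'I_n. *)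
From HB Require Import structures.
From mathcomp Require Import all_boot all_order all_algebra.
Set Implicit Arguments. Unset Strict Implicit. Unset Printing Implicit Defensive.
Import Order.TTheory GRing.Theory Num.Theory.
Local Open Scope ring_scope.

Definition simple_finite_cartan (n : nat) (A : 'M[int]_n) : Prop :=
  (0 < n)%N /\
  (forall i, A i i = 2) /\
  (forall i j, i != j -> A i j <= 0) /\
  (forall i j, A i j = 0 -> A j i = 0) /\
  (* symmetrizable with positive definite symmetrization (finite type) *)
  (exists d : 'I_n -> int,
      (forall i, 0 < d i) /\
      (forall i j, d i * A i j = d j * A j i) /\
      (forall x : 'I_n -> rat, (exists i, x i != 0) ->
          0 < \sum_i \sum_j x i * (d i * A i j)%:~R * x j)) /\
  (forall J : {set 'I_n}, J != set0 -> J != setT ->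
      exists j, exists k, [/\ j \in J, k \notin J & A j k != 0]).

(* integral weights, given by their values lambda(h_i) on simple coroots *)
Definition weight (n : nat) := 'I_n -> int.
(* elements of the coroot lattice, by coordinates in the simple coroots h_i *)
Definition coroot (n : nat) := 'I_n -> int.

Definition pairing n (l : weight n) (h : coroot n) : int := \sum_i h i * l i.

Definition fund_weight n (i : 'I_n) : weight n := fun k => (k == i)%:Z.
Definition simple_coroot n (j : 'I_n) : coroot n := fun k => (k == j)%:Z.

(* s_j lambda = lambda - lambda(h_j) alpha_j, with alpha_j(h_k) = A k j *)
Definition sref_w n (A : 'M[int]_n) (j : 'I_n) (l : weight n) : weight n :=
  fun k => l k - l j * A k j.
(* s_j h = h - alpha_j(h) h_j *)
Definition sref_c n (A : 'M[int]_n) (j : 'I_n) (h : coroot n) : coroot n :=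
  fun k => h k - (k == j)%:Z * (\sum_i h i * A i j).

(* an element w of the Weyl group W is given by a word [:: j1; ...; jk],
   w = s_j1 ... s_jk *)
Definition weyl_act_w n (A : 'M[int]_n) (w : seq 'I_n) (l : weight n) : weight n :=
  foldr (sref_w A) l w.
Definition weyl_act_c n (A : 'M[int]_n) (w : seq 'I_n) (h : coroot n) : coroot n :=
  foldr (sref_c A) h w.
Definition weyl_inv_act_w n (A : 'M[int]_n) (w : seq 'I_n) (l : weight n) : weight n :=
  weyl_act_w A (rev w) l.

(* h_alpha for alpha in R^+: the positive (real) coroots *)
Definition is_pos_coroot n (A : 'M[int]_n) (h : coroot n) : Prop :=
  (exists (w : seq 'I_n) (j : 'I_n), forall k, h k = weyl_act_c A w (simple_coroot j) k)
  /\ (forall k, 0 <= h k).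

Definition dominant n (l : weight n) : Prop := forall k, 0 <= l k.

Definition in_P2 n (l l1 l2 : weight n) : Prop :=
  dominant l1 /\ dominant l2 /\ (forall k, l1 k + l2 k = l k).

Definition preceq n (A : 'M[int]_n) (l1 l2 m1 m2 : weight n) : Prop :=
  forall h, is_pos_coroot A h ->
    Num.min (pairing l1 h) (pairing l2 h) <= Num.min (pairing m1 h) (pairing m2 h).

Definition simeq n (A : 'M[int]_n) (l1 l2 m1 m2 : weight n) : Prop :=
  forall h, is_pos_coroot A h ->
    Num.min (pairing l1 h) (pairing l2 h) = Num.min (pairing m1 h) (pairing m2 h).

(* Let (lam, nu) <= (mu1, mu2) with mu1 + mu2 = lam + nu.  An elementary
   inequality on minima shows that mu1(g) lies between nu(g) and lam(g) for
   every coroot g that is positive or the negative of a positive coroot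
   (between_on_coroot).  For nu = lam, testing on the simple coroots gives
   mu1 = lam.  For nu = lam - beta with beta = w^{-1} omega_i, we test on the
   real coroots g_j = w^{-1} h_j, where beta(g_j) = delta_ij: the weight
   w (mu1 - lam) has coordinates in [-delta_ij, 0], hence equals 0 or
   -omega_i, so mu1 is lam or nu (lower_rigid); either way (mu1, mu2) ~ (lam, nu).
   The one substantial ingredient is that every real coroot u h_j is positive
   or negative (real_coroot_sign).  Its partner root alpha has coordinates
   proportional to those of g = u h_j through the symmetrizer, alpha(g) = 2,
   and, splitting g into positive and negative parts, positive definiteness
   and evenness of the symmetrized form would force alpha(g) >= 4. *)
From HB Require Import structures.
From mathcomp Require Import all_boot all_order all_algebra.
From mathcomp Require Import zify ring.
From Stdlib Require Import FunctionalExtensionality.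
Set Implicit Arguments. Unset Strict Implicit. Unset Printing Implicit Defensive.
Import Order.TTheory GRing.Theory Num.Theory.
Local Open Scope ring_scope.

Lemma sum_kronecker n (m : 'I_n) (F : 'I_n -> int) :
  \sum_l (l == m)%:Z * F l = F m.
Proof.
rewrite (bigD1 m) //= eqxx mul1r big1 ?addr0 // => l /negbTE ->.
by rewrite mul0r.
Qed.

(* Every square symmetric matrix sums to its trace plus twice its strict
   lower triangle; this is the source of evenness of the root form. *)
Lemma sum_symmetric n (M : 'I_n -> 'I_n -> int) :
  (forall k l, M k l = M l k) ->
  \sum_k \sum_l M k l =
    \sum_k M k k + 2 * \sum_(k : 'I_n) \sum_(l : 'I_n | (l < k)%N) M k l.
Proof.
move=> Msym.
have row (k : 'I_n) : \sum_l M k l =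
    \sum_(l : 'I_n | (l < k)%N) M k l + M k k + \sum_(l : 'I_n | (k < l)%N) M k l.
  rewrite (bigID (fun l : 'I_n => (l < k)%N)) /= -addrA; congr (_ + _).
  rewrite (bigD1 k) /= ?ltnn //; congr (_ + _); apply: eq_bigl => l.
  by rewrite -leqNgt ltn_neqAle andbC eq_sym.
under eq_bigr do rewrite row.
rewrite !big_split /= (exchange_big_dep xpredT) //=.
under [X in _ + _ + X]eq_bigr do under eq_bigr do rewrite Msym.
ring.
Qed.

Lemma pairing_simple n (l : weight n) j : pairing l (simple_coroot j) = l j.
Proof. by rewrite /pairing /simple_coroot sum_kronecker. Qed.

Lemma pairing_addw n (a b c e : weight n) (h : coroot n) :
  (forall k, a k + b k = c k + e k) ->
  pairing a h + pairing b h = pairing c h + pairing e h.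
Proof.
move=> E; rewrite /pairing -!big_split /=; apply: eq_bigr => k _.
by rewrite -!mulrDr E.
Qed.

Lemma pairing_subw n (a b c : weight n) (h : coroot n) :
  (forall k, a k = b k - c k) -> pairing a h = pairing b h - pairing c h.
Proof.
move=> E; rewrite /pairing -sumrB; apply: eq_bigr => k _.
by rewrite E mulrBr.
Qed.

Lemma pairing_oppc n (l : weight n) (h : coroot n) :
  pairing l (fun k => - h k) = - pairing l h.
Proof. by rewrite /pairing -sumrN; apply: eq_bigr => k _; rewrite mulNr. Qed.

Lemma foldr_cancel (T I : Type) (f : I -> T -> T) :
  (forall j x, f j (f j x) = x) -> forall s x, foldr f (foldr f x s) (rev s) = x.
Proof. by move=> finv; elim=> [//|a s IH] x; rewrite rev_cons foldr_rcons /= finv IH. Qed.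

Lemma foldr_commute (T I : Type) (f : I -> T -> T) (phi : T -> T) :
  (forall j x, f j (phi x) = phi (f j x)) ->
  forall s x, foldr f (phi x) s = phi (foldr f x s).
Proof. by move=> fphi; elim=> [//|a s IH] x /=; rewrite IH fphi. Qed.

Section Reflections.
Variables (n : nat) (A : 'M[int]_n).

Lemma sref_adj j (l : weight n) (h : coroot n) :
  pairing (sref_w A j l) h = pairing l (sref_c A j h).
Proof.
rewrite /pairing /sref_w /sref_c.
under eq_bigr do rewrite mulrBr.
under [X in _ = X]eq_bigr do rewrite mulrBl.
rewrite !sumrB; congr (_ - _).
rewrite [RHS](eq_bigr (fun k => (k == j)%:Z * ((\sum_i h i * A i j) * l k))).
  by rewrite sum_kronecker mulr_suml; apply: eq_bigr => k _; ring.
by move=> k _; rewrite mulrA.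
Qed.

Lemma weyl_adj u (l : weight n) (h : coroot n) :
  pairing (weyl_act_w A u l) h = pairing l (weyl_act_c A (rev u) h).
Proof.
elim: u l h => [//|k u IH] l h.
by rewrite /weyl_act_w /= sref_adj IH rev_cons /weyl_act_c foldr_rcons.
Qed.

Lemma sref_w_scale j (t : int) (l : weight n) :
  sref_w A j (fun k => t * l k) = fun k => t * sref_w A j l k.
Proof. by apply: functional_extensionality => k; rewrite /sref_w; ring. Qed.

Lemma sref_c_opp j (h : coroot n) :
  sref_c A j (fun k => - h k) = fun k => - sref_c A j h k.
Proof.
apply: functional_extensionality => k; rewrite /sref_c.
under eq_bigr do rewrite mulNr.
by rewrite sumrN; ring.
Qed.

Hypothesis hdiag : forall j, A j j = 2.

Lemma sref_w_invol j (l : weight n) : sref_w A j (sref_w A j l) = l.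
Proof. by apply: functional_extensionality => k; rewrite /sref_w hdiag; ring. Qed.

Lemma sref_c_invol j (h : coroot n) : sref_c A j (sref_c A j h) = h.
Proof.
apply: functional_extensionality => k; rewrite /sref_c.
set S := \sum_i h i * A i j.
have -> : \sum_i (h i - (i == j)%:Z * S) * A i j = - S.
  under eq_bigr do rewrite mulrBl -mulrA.
  by rewrite sumrB sum_kronecker hdiag -/S; ring.
ring.
Qed.

Lemma sref_c_simple j : sref_c A j (simple_coroot j) = fun k => - simple_coroot j k.
Proof.
apply: functional_extensionality => k; rewrite /sref_c.
rewrite (eq_bigr (fun i => (i == j)%:Z * A i j)) // sum_kronecker hdiag.
by rewrite /simple_coroot; ring.
Qed.

Lemma weyl_w_cancel u (l : weight n) : weyl_act_w A (rev u) (weyl_act_w A u l) = l.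
Proof. exact: (foldr_cancel sref_w_invol). Qed.

Lemma weyl_c_cancel u (h : coroot n) : weyl_act_c A u (weyl_act_c A (rev u) h) = h.
Proof. by rewrite -{1}(revK u); exact: (foldr_cancel sref_c_invol). Qed.

End Reflections.

Section RealRoots.
Variables (n : nat) (A : 'M[int]_n).

(* A root alpha = sum_k c_k alpha_k is recorded by its coordinates c; since
   alpha_k(h_l) = a_lk, its value alpha(g) on a coroot g is eval_root c g. *)
Definition eval_root (c : 'I_n -> int) (g : coroot n) : int :=
  \sum_k c k * (\sum_l A l k * g l).

(* s_j alpha = alpha - alpha(h_j) alpha_j, in coordinates. *)
Definition sref_root (j : 'I_n) (c : 'I_n -> int) : 'I_n -> int :=
  fun k => c k - (k == j)%:Z * (\sum_l c l * A j l).

(* The real root u alpha_j, partner of the real coroot u h_j. *)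
Definition real_root (u : seq 'I_n) (j : 'I_n) : 'I_n -> int :=
  foldr sref_root (fun k => (k == j)%:Z) u.

Lemma eval_root_split (c g P R p q : 'I_n -> int) :
  (forall k, c k = P k - R k) -> (forall k, g k = p k - q k) ->
  eval_root c g = eval_root P p - eval_root P q - eval_root R p + eval_root R q.
Proof.
move=> Ec Eg; rewrite /eval_root.
have inner k : \sum_l A l k * g l = \sum_l A l k * p l - \sum_l A l k * q l.
  by rewrite -sumrB; apply: eq_bigr => l _; rewrite Eg mulrBr.
under eq_bigr do rewrite inner Ec mulrBl !mulrBr.
by rewrite !sumrB; ring.
Qed.

Hypothesis hdiag : forall j, A j j = 2.

Lemma eval_root_sref m c g :
  eval_root (sref_root m c) (sref_c A m g) = eval_root c g.
Proof.
rewrite /eval_root /sref_root /sref_c.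
set s := \sum_l c l * A m l; set t := \sum_i g i * A i m.
have inner k : \sum_l A l k * (g l - (l == m)%:Z * t) =
               \sum_l A l k * g l - A m k * t.
  by under eq_bigr do rewrite mulrBr mulrCA; rewrite sumrB sum_kronecker.
under eq_bigr do rewrite inner mulrBl -mulrA.
rewrite sumrB sum_kronecker.
under eq_bigr do rewrite mulrBr mulrA.
rewrite sumrB -mulr_suml -/s.
have -> : \sum_l A l m * g l = t by apply: eq_bigr => l _; rewrite mulrC.
by rewrite hdiag; ring.
Qed.

Lemma eval_real_root u j :
  eval_root (real_root u j) (weyl_act_c A u (simple_coroot j)) = 2.
Proof.
elim: u => [|m u IH]; last by rewrite /real_root /weyl_act_c /= eval_root_sref.
rewrite /eval_root /real_root /weyl_act_c /= /simple_coroot.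
under eq_bigr do under eq_bigr do rewrite mulrC.
by under eq_bigr do rewrite sum_kronecker; rewrite sum_kronecker hdiag.
Qed.

Section Symmetrizer.
Variable d : 'I_n -> int.
Hypotheses (hd : forall i, 0 < d i) (hsym : forall i j, d i * A i j = d j * A j i).

Lemma real_root_coroot u j k :
  d k * real_root u j k = d j * weyl_act_c A u (simple_coroot j) k.
Proof.
elim: u k => [|m u IH] k.
  rewrite /real_root /weyl_act_c /= /simple_coroot.
  by case: eqP => [->|]; rewrite ?mulr1 ?mulr0.
rewrite /real_root /weyl_act_c /= /sref_root /sref_c.
rewrite -/(real_root u j) -/(weyl_act_c A u _).
case: (eqVneq k m) => [->|_]; last by rewrite !mul0r !subr0 IH.
rewrite !mul1r !mulrBr IH; congr (_ - _).
rewrite !mulr_sumr; apply: eq_bigr => l _.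
transitivity (real_root u j l * (d m * A m l)); first ring.
rewrite hsym; transitivity ((d l * real_root u j l) * A l m); first ring.
by rewrite IH; ring.
Qed.

(* For proportional X, x the value eval_root X x is even: the matrix
   X_k a_lk x_l is symmetric with diagonal 2 X_k x_k. *)
Lemma eval_root_even (e : int) (X x : 'I_n -> int) :
  (forall k, d k * X k = e * x k) -> exists t, eval_root X x = 2 * t.
Proof.
move=> hX; pose M k l := X k * (A l k * x l).
have Msym k l : M k l = M l k.
  apply: (mulfI (x := d k * d l)); first by rewrite mulf_neq0 // lt0r_neq0.
  transitivity ((d k * X k) * x l * (d l * A l k)); first by rewrite /M; ring.
  rewrite hX hsym; transitivity ((d l * X l) * x k * (d k * A k l)); last first.
    by rewrite /M; ring.
  by rewrite hX; ring.
exists (\sum_k X k * x k + \sum_(k : 'I_n) \sum_(l : 'I_n | (l < k)%N) M k l).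
rewrite /eval_root (eq_bigr (fun k => \sum_l M k l)); last first.
  by move=> k _; rewrite mulr_sumr.
rewrite sum_symmetric // mulrDr; congr (_ + _).
by rewrite mulr_sumr; apply: eq_bigr => k _; rewrite /M hdiag; ring.
Qed.

Hypothesis hpd : forall x : 'I_n -> rat, (exists i, x i != 0) ->
  0 < \sum_i \sum_j x i * (d i * A i j)%:~R * x j.

(* For proportional X, x (with positive ratio) and x != 0, eval_root X x is
   e times the positive definite symmetrized form at x_k / d_k. *)
Lemma eval_root_pos (e : int) (X x : 'I_n -> int) :
  (forall k, d k * X k = e * x k) -> 0 < e -> (exists a, x a != 0) ->
  0 < eval_root X x.
Proof.
move=> hX he [a xa]; pose y k : rat := (x k)%:~R / (d k)%:~R.
have dne k : ((d k)%:~R : rat) != 0 by rewrite intr_eq0 lt0r_neq0.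
have ya : y a != 0 by rewrite /y mulf_neq0 ?invr_eq0 // intr_eq0.
have Q_pos := hpd (ex_intro _ a ya).
rewrite -(ltr0z rat).
have -> : ((eval_root X x)%:~R : rat) =
          e%:~R * \sum_i \sum_j y i * (d i * A i j)%:~R * y j.
  rewrite /eval_root rmorph_sum [X in _ * X]exchange_big mulr_sumr /=.
  apply: eq_bigr => k _; rewrite rmorphM rmorph_sum !mulr_sumr.
  apply: eq_bigr => l _.
  have eX : ((X k)%:~R : rat) = e%:~R * y k.
    by apply: (mulfI (dne k)); rewrite -intrM hX intrM /y; field; exact: dne.
  have ex : ((x l)%:~R : rat) = (d l)%:~R * y l by rewrite /y; field; exact: dne.
  by rewrite !rmorphM /= eX ex; ring.
by rewrite pmulr_rgt0 ?ltr0z.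
Qed.

Lemma eval_root_ge2 (e : int) (X x : 'I_n -> int) :
  (forall k, d k * X k = e * x k) -> 0 < e -> (exists a, x a != 0) ->
  2 <= eval_root X x.
Proof.
move=> hX he xne0; have [t Et] := eval_root_even hX.
by have := eval_root_pos hX he xne0; rewrite Et; lia.
Qed.

Hypothesis hoff : forall i j, i != j -> A i j <= 0.

(* If P, q >= 0 have disjoint supports, only off-diagonal entries a_lk <= 0
   contribute to eval_root P q, which is therefore <= 0. *)
Lemma eval_root_disjoint (P q : 'I_n -> int) :
  (forall k, 0 <= P k) -> (forall k, 0 <= q k) -> (forall k, P k = 0 \/ q k = 0) ->
  eval_root P q <= 0.
Proof.
move=> P0 q0 Pq; apply: sumr_le0 => k _; rewrite mulr_sumr.
apply: sumr_le0 => l _; case: (eqVneq l k) => [->|lk].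
  by case: (Pq k) => ->; rewrite ?mul0r ?mulr0.
by apply: mulr_ge0_le0 => //; apply: mulr_le0_ge0 => //; exact: hoff.
Qed.

(* A vector x proportional to X with eval_root X x = 2 has constant sign:
   otherwise its positive and negative parts p, q (and those of X) give
   2 = X+(p) - X+(q) - X-(p) + X-(q) >= 2 + 2 by the two lemmas above. *)
Lemma norm2_sign (e : int) (X x : 'I_n -> int) :
  (forall k, d k * X k = e * x k) -> 0 < e -> eval_root X x = 2 ->
  (forall k, 0 <= x k) \/ (forall k, x k <= 0).
Proof.
move=> hX he X2.
case: (boolP [forall k, 0 <= x k]) => [/forallP|]; first by left.
rewrite negb_forall => /existsP [a]; rewrite -ltNge => xa.
case: (boolP [forall k, x k <= 0]) => [/forallP|]; first by right.
rewrite negb_forall => /existsP [b]; rewrite -ltNge => xb.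
have sgnX k : (0 <= X k) = (0 <= x k).
  by rewrite -(pmulr_rge0 _ (hd k)) hX pmulr_rge0.
pose pos (y : 'I_n -> int) k := if 0 <= x k then y k else 0.
pose neg (y : 'I_n -> int) k := if 0 <= x k then 0 else - y k.
have parts y k : y k = pos y k - neg y k.
  by rewrite /pos /neg; case: ifP; rewrite ?subr0 ?sub0r ?opprK.
have pos0 y : (forall k, (0 <= y k) = (0 <= x k)) -> forall k, 0 <= pos y k.
  by move=> sy k; rewrite /pos; case: ifP; rewrite ?sy.
have neg0 y : (forall k, (0 <= y k) = (0 <= x k)) -> forall k, 0 <= neg y k.
  move=> sy k; rewrite /neg; case: ifP => // /negbT.
  by rewrite -sy -ltNge oppr_ge0 => /ltW.
have hpos k : d k * pos X k = e * pos x k.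
  by rewrite /pos; case: ifP; rewrite ?mulr0.
have hneg k : d k * neg X k = e * neg x k.
  by rewrite /neg; case: ifP; rewrite ?mulr0 ?mulrN ?hX.
have disj y z k : pos y k = 0 \/ neg z k = 0.
  by rewrite /pos /neg; case: ifP; [right|left].
have ge2p : 2 <= eval_root (pos X) (pos x).
  by apply: (eval_root_ge2 hpos he); exists b; rewrite /pos ltW // gt_eqF.
have ge2n : 2 <= eval_root (neg X) (neg x).
  by apply: (eval_root_ge2 hneg he); exists a; rewrite /neg leNgt xa oppr_eq0 lt_eqF.
have le0pn : eval_root (pos X) (neg x) <= 0.
  by apply: eval_root_disjoint; [exact: pos0|exact: neg0|exact: disj].
have le0np : eval_root (neg X) (pos x) <= 0.
  apply: eval_root_disjoint; [exact: neg0|exact: pos0|] => k.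
  by case: (disj x X k); [right|left].
have := eval_root_split (parts X) (parts x); rewrite X2; lia.
Qed.

End Symmetrizer.
End RealRoots.

Lemma real_coroot_sign n (A : 'M[int]_n) (hA : simple_finite_cartan A) u j :
  (forall k, 0 <= weyl_act_c A u (simple_coroot j) k) \/
  (forall k, weyl_act_c A u (simple_coroot j) k <= 0).
Proof.
case: hA => _ [hdiag [hoff [_ [[d [hd [hsym hpd]]] _]]]].
apply: (norm2_sign hdiag hd hsym hpd hoff (real_root_coroot hsym u j) (hd j)).
exact: eval_real_root.
Qed.

(* Simple coroots are positive, and every real coroot u h_j is positive or
   negative, the negative ones being -(u s_j h_j). *)
Lemma simple_coroot_pos n (A : 'M[int]_n) j : is_pos_coroot A (simple_coroot j).
Proof. by split; [exists [::], j | move=> k; rewrite /simple_coroot]. Qed.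

Lemma real_coroot_pos_or_neg n (A : 'M[int]_n) (hA : simple_finite_cartan A) u j :
  is_pos_coroot A (weyl_act_c A u (simple_coroot j)) \/
  is_pos_coroot A (fun k => - weyl_act_c A u (simple_coroot j) k).
Proof.
have hdiag : forall j, A j j = 2 by case: hA => _ [].
case: (real_coroot_sign hA u j) => sgn; [left|right]; split=> //.
- by exists u, j.
- exists (rcons u j), j => k.
  rewrite /weyl_act_c foldr_rcons sref_c_simple //.
  by rewrite (foldr_commute (phi := fun h k => - h k)) //; exact: sref_c_opp.
- by move=> k; rewrite oppr_ge0.
Qed.

Lemma between_of_min_le (L N M1 M2 : int) :
  N <= L -> M1 + M2 = L + N ->
  Num.min L N <= Num.min M1 M2 \/ Num.min (- L) (- N) <= Num.min (- M1) (- M2) ->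
  N <= M1 <= L.
Proof. by move=> hNL hsum; rewrite !le_min !ge_min; lia. Qed.

Lemma between_on_coroot n (A : 'M[int]_n) (lam nu mu1 mu2 : weight n) (g : coroot n) :
  (forall k, mu1 k + mu2 k = lam k + nu k) -> preceq A lam nu mu1 mu2 ->
  is_pos_coroot A g \/ is_pos_coroot A (fun k => - g k) ->
  pairing nu g <= pairing lam g -> pairing nu g <= pairing mu1 g <= pairing lam g.
Proof.
move=> hsum hle hg hNL; apply: (between_of_min_le hNL (pairing_addw g hsum)).
by case: hg => /hle; [left | rewrite !pairing_oppc; right].
Qed.

(* First claim: (lam, lam) <= (mu1, mu2) forces mu1 = lam, testing on the
   simple coroots. *)
Lemma diag_rigid n (A : 'M[int]_n) (lam mu1 mu2 : weight n) :
  (forall k, mu1 k + mu2 k = lam k + lam k) -> preceq A lam lam mu1 mu2 ->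
  mu1 = lam.
Proof.
move=> hsum hle; apply: functional_extensionality => j.
have := between_on_coroot hsum hle (or_introl (simple_coroot_pos A j)) (lexx _).
by rewrite !pairing_simple; lia.
Qed.

Definition lower_weight n (A : 'M[int]_n) (w : seq 'I_n) (i : 'I_n) (lam : weight n) :
  weight n := fun k => lam k - weyl_inv_act_w A w (fund_weight i) k.

(* On g_j = w^{-1} h_j we have w^{-1} omega_i (g_j) =
   delta_ij, so w (mu1 - lam) has j-th coordinate in [-delta_ij, 0]; it is
   therefore -t omega_i with t in {0, 1}, and mu1 - lam = -t w^{-1} omega_i. *)
Lemma lower_rigid n (A : 'M[int]_n) (hA : simple_finite_cartan A)
    (w : seq 'I_n) (i : 'I_n) (lam mu1 mu2 : weight n) :
  (forall k, mu1 k + mu2 k = lam k + lower_weight A w i lam k) ->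
  preceq A lam (lower_weight A w i lam) mu1 mu2 ->
  mu1 = lam \/ mu1 = lower_weight A w i lam.
Proof.
move=> hsum hle; have hdiag : forall j, A j j = 2 by case: hA => _ [].
set beta := weyl_inv_act_w A w (fund_weight i).
pose delta : weight n := fun k => mu1 k - lam k.
have coord j : - (j == i)%:Z <= weyl_act_w A w delta j <= 0.
  set g := weyl_act_c A (rev w) (simple_coroot j).
  have beta_g : pairing beta g = (j == i)%:Z.
    by rewrite /beta /weyl_inv_act_w weyl_adj revK weyl_c_cancel // pairing_simple.
  have lower_g : pairing (lower_weight A w i lam) g = pairing lam g - pairing beta g.
    by apply: pairing_subw.
  have delta_g : weyl_act_w A w delta j = pairing mu1 g - pairing lam g.
    by rewrite -pairing_simple weyl_adj; apply: pairing_subw.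
  have := between_on_coroot hsum hle (real_coroot_pos_or_neg hA (rev w) j).
  by rewrite -/g lower_g beta_g delta_g; case: (j == i); lia.
have [t [t01 wdelta]] : exists t : int, (t = 0 \/ t = 1) /\
    weyl_act_w A w delta = fun k => - t * fund_weight i k.
  exists (- weyl_act_w A w delta i); split.
    by have := coord i; rewrite eqxx; lia.
  apply: functional_extensionality => j; rewrite /fund_weight.
  by have := coord j; case: (eqVneq j i) => [-> | _]; lia.
have delta_eq : delta = fun k => - t * beta k.
  rewrite -(weyl_w_cancel hdiag w delta) wdelta.
  rewrite /weyl_act_w (foldr_commute (phi := fun l k => - t * l k)) => [//|j x].
  exact: sref_w_scale.
case: t01 delta_eq => -> delta_eq; [left | right];
  apply: functional_extensionality => k;
  have := congr1 (fun f => f k) delta_eq; rewrite /delta /lower_weight -/beta /=; lia.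
Qed.

Lemma simeq_of_rigid n (A : 'M[int]_n) (lam nu mu1 mu2 : weight n) :
  (forall k, mu1 k + mu2 k = lam k + nu k) -> mu1 = lam \/ mu1 = nu ->
  simeq A mu1 mu2 lam nu.
Proof.
move=> hsum hmu1 h _; have := pairing_addw h hsum.
case: hmu1 => -> hsum_h.
  by have -> : pairing mu2 h = pairing nu h by lia.
have -> : pairing mu2 h = pairing lam h by lia.
by rewrite minC.
Qed.

Theorem lemma5p2 (n : nat) (A : 'M[int]_n) (hA : simple_finite_cartan A)
  (lam : weight n) (i : 'I_n) (w : seq 'I_n)
  (hlam : dominant lam)
  (hdom : dominant (fun k => lam k - weyl_inv_act_w A w (fund_weight i) k)) :
  (forall mu1 mu2 : weight n,
     in_P2 (fun k => 2 * lam k) mu1 mu2 ->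
     preceq A lam lam mu1 mu2 -> simeq A mu1 mu2 lam lam) /\
  (forall mu1 mu2 : weight n,
     in_P2 (fun k => 2 * lam k - weyl_inv_act_w A w (fund_weight i) k) mu1 mu2 ->
     preceq A lam (fun k => lam k - weyl_inv_act_w A w (fund_weight i) k) mu1 mu2 ->
     simeq A mu1 mu2 lam (fun k => lam k - weyl_inv_act_w A w (fund_weight i) k)).
Proof.
split=> mu1 mu2 [_ [_ hsum]] hle.
- have hsum' k : mu1 k + mu2 k = lam k + lam k by rewrite hsum; ring.
  exact: simeq_of_rigid hsum' (or_introl (diag_rigid hsum' hle)).
- have hsum' k : mu1 k + mu2 k = lam k + lower_weight A w i lam k.
    by rewrite hsum /lower_weight; ring.
  exact: simeq_of_rigid hsum' (lower_rigid hA hsum' hle).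
Qed.
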